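(* Let $R$ be a ring and $n \geq 0$. The following are equivalent: (1) $R$ is $n$-coherent; (2) the class $\mathrm{FP}_n$ of left $R$-modules is thick; (3) $\mathrm{FP}_n = \mathrm{FP}_\infty$.
   Context: $R$ is an associative ring with unit; modules are left $R$-modules. For $n \ge 0$, a module $M$ is finitely $n$-presented if there is an exact sequence $F_n \to \cdots \to F_0 \to M \to 0$ with every $F_i$ finitely generated free; $\mathrm{FP}_n$ is the class of such modules. $\mathrm{FP}_\infty$ is the class of modules having a projective resolution by finitely generated free modules (equivalently $\bigcap_{n\ge0}\mathrm{FP}_n$). $R$ is $n$-coherent if $\mathrm{FP}_n \subseteq \mathrm{FP}_{n+1}$. A class $\mathcal W$ of modules is thick if it is closed under direct summands and, whenever $0 \to A \to B \to C \to 0$ is exact with two of $A,B,C$ in $\mathcal W$, the third is in $\mathcal W$. *)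

From HB Require Import structures.
From mathcomp Require Import all_boot all_order all_algebra.
Set Implicit Arguments. Unset Strict Implicit. Unset Printing Implicit Defensive.
Import GRing.Theory.
Local Open Scope ring_scope.

(* Left R-modules are [lmodType R]; the finitely generated free module of rank
   k is the row-vector module 'rV[R]_k (scalars act on the left, entrywise). *)

Definition exact_at (R : pzRingType) (A B C : lmodType R)
  (f : {linear A -> B}) (g : {linear B -> C}) : Prop :=
  forall b : B, g b = 0 <-> exists a : A, f a = b.

(* A family of maps  ... -> F_{i+1} --d i--> F_i -> ... -> F_0 --eps--> M,
   with F_i = R^(k i) finitely generated free.  [free_complex_exact_upto n]
   says that F_n -> ... -> F_0 -> M -> 0 is exact, i.e. eps is surjective
   and the sequence is exact at F_0, ..., F_{n-1}. *)
Definition free_complex_exact_upto (R : pzRingType) (M : lmodType R) (n : nat)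
  (k : nat -> nat) (d : forall i, {linear 'rV[R]_(k i.+1) -> 'rV[R]_(k i)})
  (eps : {linear 'rV[R]_(k 0) -> M}) : Prop :=
  (forall m : M, exists x, eps x = m) /\
  ((0 < n)%N -> exact_at (d 0) eps) /\
  (forall i, (i.+1 < n)%N -> exact_at (d i.+1) (d i)).

Definition FPn (R : pzRingType) (n : nat) (M : lmodType R) : Prop :=
  exists (k : nat -> nat) (d : forall i, {linear 'rV[R]_(k i.+1) -> 'rV[R]_(k i)})
         (eps : {linear 'rV[R]_(k 0) -> M}),
    free_complex_exact_upto n d eps.

Definition FPinf (R : pzRingType) (M : lmodType R) : Prop :=
  exists (k : nat -> nat) (d : forall i, {linear 'rV[R]_(k i.+1) -> 'rV[R]_(k i)})
         (eps : {linear 'rV[R]_(k 0) -> M}),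
    (forall m : M, exists x, eps x = m) /\
    exact_at (d 0) eps /\
    (forall i, exact_at (d i.+1) (d i)).

Definition n_coherent (R : pzRingType) (n : nat) : Prop :=
  forall M : lmodType R, FPn n M -> FPn n.+1 M.

Definition direct_summand (R : pzRingType) (A M : lmodType R) : Prop :=
  exists (i : {linear A -> M}) (p : {linear M -> A}), forall a, p (i a) = a.

Definition short_exact (R : pzRingType) (A B C : lmodType R)
  (f : {linear A -> B}) (g : {linear B -> C}) : Prop :=
  injective f /\ (forall c : C, exists b, g b = c) /\ exact_at f g.

Definition thick (R : pzRingType) (W : lmodType R -> Prop) : Prop :=
  (forall A M : lmodType R, W M -> direct_summand A M -> W A) /\
  (forall (A B C : lmodType R) (f : {linear A -> B}) (g : {linear B -> C}),
     short_exact f g ->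
     (W A -> W B -> W C) /\ (W A -> W C -> W B) /\ (W B -> W C -> W A)).

(* Write FP_m recursively: M is in FP_(m+1) iff some epimorphism R^k -> M has
   its kernel in FP_m.  By induction on m (horseshoe lemma, kernels of
   composites, pullbacks along free modules) FP_m is closed under extensions and
   direct summands, under cokernels of monomorphisms whose middle term is in
   FP_(m+1), and under kernels of epimorphisms onto a module of FP_(m+1).  So
   n-coherence makes FP_n thick.  Conversely, when FP_n is thick the kernel of an
   epimorphism R^k -> M with M in FP_n lies in FP_n again, which is n-coherence;
   iterating this syzygy step builds a resolution of M by finitely generated
   free modules.  Finally FP_oo is contained in FP_(n+1). *)

From HB Require Import structures.
From mathcomp Require Import all_boot all_order all_algebra.
From Stdlib Require Import ClassicalEpsilon.

Set Implicit Arguments. Unset Strict Implicit. Unset Printing Implicit Defensive.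
Import GRing.Theory.
Local Open Scope ring_scope.

Definition surjective (U V : Type) (h : U -> V) := forall v, exists u, h u = v.

Section LinearOf.
Variables (R : pzRingType) (U V : lmodType R) (h : U -> V).
Hypothesis h_linear : linear h.

Definition linear_of : {linear U -> V} :=
  HB.pack_for {linear U -> V} h (GRing.isLinear.Build R U V *:%R h h_linear).

End LinearOf.

Section Kernel.
Variables (R : pzRingType) (U V : lmodType R) (f : {linear U -> V}).

Definition ker_pred : pred U := fun x => f x == 0.

Lemma ker_pred_closed : subsemimod_closed ker_pred.
Proof.
split; first split.
- by rewrite /ker_pred unfold_in /= linear0.
- by move=> x y; rewrite !unfold_in /= linearD => /eqP -> /eqP ->; rewrite addr0.
- by move=> a x; rewrite !unfold_in /= => /eqP fx0; rewrite linearZ /= fx0; apply/eqP/scaler0.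
Qed.

HB.instance Definition _ := GRing.isSubmodClosed.Build R U ker_pred ker_pred_closed.
Record kernel := Kernel { kval : U; kvalP : kval \in ker_pred }.
HB.instance Definition _ := [isSub for kval].
HB.instance Definition _ := [Choice of kernel by <:].
HB.instance Definition _ := [SubChoice_isSubLmodule of kernel by <:].

Definition in_kernel x (fx0 : f x = 0) : kernel := Kernel (introT eqP fx0).

Definition kernel_incl : {linear kernel -> U} := val.

Lemma kval_ker (x : kernel) : f (kval x) = 0.
Proof. exact/eqP/(kvalP x). Qed.

Lemma kval_inj : injective kval.
Proof. exact: val_inj. Qed.

Lemma kval_eq0 (x : kernel) : kval x = 0 <-> x = 0.
Proof. by split=> [x0|->//]; apply: kval_inj. Qed.

Variables (W : lmodType R) (g : {linear W -> U}).
Hypothesis fg0 : forall w, f (g w) = 0.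

Lemma ker_lift_linear : linear (fun w => in_kernel (fg0 w)).
Proof. by move=> a x y; apply: kval_inj; rewrite /= linearP. Qed.

Definition ker_lift : {linear W -> kernel} := linear_of ker_lift_linear.

End Kernel.
Arguments kval {R U V f}.

Section KernelMap.
Variables (R : pzRingType) (U1 V1 U2 V2 : lmodType R).
Variables (e1 : {linear U1 -> V1}) (e2 : {linear U2 -> V2}) (phi : {linear U1 -> U2}).
Hypothesis phi_ker : forall x, e1 x = 0 -> e2 (phi x) = 0.

Lemma ker_map_subproof (x : kernel e1) : e2 ((phi \o kernel_incl e1) x) = 0.
Proof. exact/phi_ker/kval_ker. Qed.

Definition ker_map : {linear kernel e1 -> kernel e2} := ker_lift ker_map_subproof.

Lemma ker_mapE x : kval (ker_map x) = phi (kval x). Proof. by []. Qed.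

End KernelMap.

Lemma exact_at_comp0 (R : pzRingType) (A B C : lmodType R)
    (f : {linear A -> B}) (g : {linear B -> C}) :
  exact_at f g -> forall a, g (f a) = 0.
Proof. by move=> fg a; apply/(fg (f a)); exists a. Qed.

Lemma pair_linear (R : pzRingType) (U V W : lmodType R)
    (f1 : {linear W -> U}) (f2 : {linear W -> V}) :
  linear (fun w => (f1 w, f2 w)).
Proof. by move=> a x y; rewrite !linearP. Qed.

Section KernelSequences.
Variables (R : pzRingType) (U B C : lmodType R).

Lemma short_exact_kernel (e : {linear U -> B}) :
  surjective e -> short_exact (kernel_incl e) e.
Proof.
move=> e_surj; split; [exact: kval_inj | split=> // b].
by split=> [eb0|[x <-]]; [exists (in_kernel eb0) | exact: kval_ker].
Qed.

Lemma short_exact_ker_comp (e : {linear U -> B}) (q : {linear B -> C}) :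
  surjective e ->
  exists (i : {linear kernel e -> kernel (q \o e)}) (p : {linear kernel (q \o e) -> kernel q}),
    short_exact i p.
Proof.
move=> e_surj.
have i_ker x : e x = 0 -> (q \o e) (idfun x) = 0 by move=> /= ->; rewrite linear0.
have p_ker x : (q \o e) x = 0 -> q (e x) = 0 by [].
exists (ker_map i_ker), (ker_map p_ker); split; [|split].
- by move=> x y /(congr1 kval); rewrite !ker_mapE => /kval_inj.
- move=> y; have [x ex] := e_surj (kval y).
  have qex0 : (q \o e) x = 0 by rewrite /= ex kval_ker.
  by exists (in_kernel qex0); apply: kval_inj.
- move=> x; split; last by case=> y <-; apply/kval_eq0; rewrite ker_mapE /= kval_ker.
  by move/kval_eq0; rewrite ker_mapE => ex0; exists (in_kernel ex0); apply: kval_inj.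
Qed.

Definition pullback_map (g : {linear B -> C}) (e : {linear U -> C}) :
  {linear (B * U)%type -> C} := (g \o fst) \- (e \o snd).

Lemma short_exact_pullback (g : {linear B -> C}) (e : {linear U -> C}) :
  surjective e ->
  exists (i : {linear kernel e -> kernel (pullback_map g e)})
         (p : {linear kernel (pullback_map g e) -> B}), short_exact i p.
Proof.
move=> e_surj.
have i_ker x : e x = 0 -> pullback_map g e (linear_of (pair_linear \0 idfun) x) = 0.
  by move=> /= ->; rewrite linear0 subr0.
exists (ker_map i_ker), (fst \o kernel_incl _); split; [|split].
- by move=> x y /(congr1 (snd \o kval)) /kval_inj.
- move=> b; have [x ex] := e_surj (g b).
  have gex0 : pullback_map g e (b, x) = 0 by rewrite /= ex subrr.
  by exists (in_kernel gex0).
- move=> z; split; last by case=> y <-.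
  move=> /= z1; have := kval_ker z; rewrite /= z1 linear0 sub0r => /eqP.
  rewrite oppr_eq0 => /eqP ez2; exists (in_kernel ez2).
  by apply: kval_inj; rewrite [RHS]surjective_pairing z1.
Qed.

End KernelSequences.

Lemma eq_thick (R : pzRingType) (W1 W2 : lmodType R -> Prop) :
  (forall M, W1 M <-> W2 M) -> thick W1 -> thick W2.
Proof.
move=> W12 [W1_summand W1_ses]; split=> [A M W2M AM|A B C f g fg].
  exact/(W12 A)/(W1_summand A M (proj2 (W12 M) W2M) AM).
have [W1_C [W1_B W1_A]] := W1_ses A B C f g fg.
split; [|split] => W2X W2Y; apply/W12.
- by apply: W1_C; apply/W12.
- by apply: W1_B; apply/W12.
- by apply: W1_A; apply/W12.
Qed.

Section FinitePresentation.
Variable R : pzRingType.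
Notation F k := 'rV[R]_k.

Definition finitely_generated (M : lmodType R) :=
  exists k (e : {linear F k -> M}), surjective e.

(* Equivalent to [FPn] (see [FPnE]), but recursive in m through the kernel of
   a free presentation F k -> M. *)
Fixpoint fpres (m : nat) (M : lmodType R) : Prop :=
  match m with
  | 0 => finitely_generated M
  | m'.+1 => exists k (e : {linear F k -> M}), surjective e /\ fpres m' (kernel e)
  end.

Lemma fpres_iso m (M N : lmodType R) (phi : {linear M -> N}) :
  injective phi -> surjective phi -> fpres m M -> fpres m N.
Proof.
elim: m M N phi => [|m IH] M N phi phi_inj phi_surj.
  case=> k [e e_surj]; exists k, (phi \o e) => v.
  by have [u <-] := phi_surj v; have [x <-] := e_surj u; exists x.
case=> k [e [e_surj Ke]]; exists k, (phi \o e); split.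
  by move=> v; have [u <-] := phi_surj v; have [x <-] := e_surj u; exists x.
have phi_ker x : e x = 0 -> (phi \o e) (idfun x) = 0 by move=> /= ->; rewrite linear0.
apply: (IH _ _ (ker_map phi_ker) _ _ Ke).
  by move=> x y /(congr1 kval); rewrite !ker_mapE => /kval_inj.
move=> y; have ey0 : e (kval y) = 0 by apply: phi_inj; rewrite linear0; exact: (kval_ker y).
by exists (in_kernel ey0); apply: kval_inj.
Qed.

Lemma fpres_trivial m (M : lmodType R) : (forall x : M, x = 0) -> fpres m M.
Proof.
elim: m M => [|m IH] M M0; exists 0%N, \0.
  by move=> v; exists 0; rewrite [v]M0.
split; first by move=> v; exists 0; rewrite [v]M0.
by apply: IH => x; apply/kval_inj/thinmx0.
Qed.

Lemma fpres_free m k : fpres m (F k).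
Proof.
case: m => [|m]; exists k, idfun; first by move=> v; exists v.
split; first by move=> v; exists v.
by apply: fpres_trivial => x; apply: kval_inj; rewrite /= -[kval x]/(idfun _) kval_ker.
Qed.

Lemma fpresW m M : fpres m.+1 M -> fpres m M.
Proof.
elim: m M => [|m IH] M [k [e [e_surj Ke]]]; exists k, e => //.
by split=> //; apply: IH.
Qed.

Lemma fpres_fg m M : fpres m M -> finitely_generated M.
Proof. by elim: m M => [//|m IH] M /fpresW; apply: IH. Qed.

Lemma free_lift k (B C : lmodType R) (g : {linear B -> C}) (eC : {linear F k -> C}) :
  surjective g -> exists h : {linear F k -> B}, forall x, g (h x) = eC x.
Proof.
move=> g_surj.
have [b gb] := fin_all_exists (fun j : 'I_k => g_surj (eC (delta_mx 0 j))).
have h_linear : linear (fun x : F k => \sum_j x 0 j *: b j).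
  move=> a x y; rewrite scaler_sumr -big_split /=; apply: eq_bigr => j _.
  by rewrite !mxE scalerDl scalerA.
exists (linear_of h_linear) => x /=; rewrite linear_sum [in RHS](row_sum_delta x).
by rewrite linear_sum; apply: eq_bigr => j _; rewrite !linearZ /= gb.
Qed.

Lemma linear_factor_inj (W A B : lmodType R) (f : {linear A -> B}) (q : {linear W -> B}) :
  injective f -> (forall w, exists a, f a = q w) ->
  exists r : {linear W -> A}, forall w, f (r w) = q w.
Proof.
move=> f_inj q_im.
have q_im' w : exists a, f a == q w by have [a fa] := q_im w; exists a; apply/eqP.
pose r w := xchoose (q_im' w).
have fr w : f (r w) = q w by apply/eqP/(xchooseP (q_im' w)).
have r_linear : linear r.
  by move=> a x y; apply: f_inj; rewrite linearP /= !fr linearP.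
by exists (linear_of r_linear).
Qed.

Lemma horseshoe a c (A B C : lmodType R) (f : {linear A -> B}) (g : {linear B -> C})
  (eA : {linear F a -> A}) (eC : {linear F c -> C}) :
  short_exact f g -> surjective eA -> surjective eC ->
  exists eB : {linear F (a + c) -> B}, surjective eB /\
    exists (i : {linear kernel eA -> kernel eB}) (p : {linear kernel eB -> kernel eC}),
      short_exact i p.
Proof.
move=> [f_inj [g_surj fg]] eA_surj eC_surj.
have gf0 := exact_at_comp0 fg.
have [h gh] := free_lift eC g_surj.
pose eB := (f \o eA \o lsubmx) \+ (h \o rsubmx) : {linear F (a + c) -> B}.
exists eB; split.
  move=> b; have [v ev] := eC_surj (g b).
  have : g (b - h v) = 0 by rewrite linearB /= gh ev subrr.
  case/fg => a0 fa0; have [u eu] := eA_surj a0.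
  by exists (row_mx u v); rewrite /= row_mxKl row_mxKr eu fa0 subrK.
have inl_linear : linear (fun x : F a => row_mx x (0 : F c)).
  by move=> r x y /=; rewrite scale_row_mx add_row_mx scaler0 addr0.
pose inl := linear_of inl_linear.
have inl_ker x : eA x = 0 -> eB (inl x) = 0.
  by move=> eAx0; rewrite /= row_mxKl row_mxKr eAx0 !linear0 addr0.
have rsub_ker x : eB x = 0 -> eC (rsubmx x) = 0.
  move=> eBx0; rewrite -gh.
  have -> : h (rsubmx x) = eB x - f (eA (lsubmx x)) by rewrite /= addrC addKr.
  by rewrite eBx0 sub0r linearN /= gf0 oppr0.
exists (ker_map inl_ker), (ker_map rsub_ker).
split; [|split].
- move=> x y /(congr1 kval); rewrite !ker_mapE /= => /(congr1 lsubmx).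
  by rewrite !row_mxKl => /kval_inj.
- move=> v; have := kval_ker v; rewrite -gh; case/fg => a0 fa0.
  have [u eu] := eA_surj a0.
  have eB0 : eB (row_mx (- u) (kval v)) = 0.
    by rewrite /= row_mxKl row_mxKr !linearN /= eu fa0 addNr.
  by exists (in_kernel eB0); apply: kval_inj; rewrite ker_mapE /= row_mxKr.
- move=> x; split; last by case=> y <-; apply/kval_eq0; rewrite !ker_mapE /= row_mxKr.
  move/kval_eq0; rewrite ker_mapE /= => rx0.
  have := kval_ker x; rewrite /= rx0 linear0 addr0 => fx0.
  have eAx0 : eA (lsubmx (kval x)) = 0 by apply: f_inj; rewrite fx0 linear0.
  by exists (in_kernel eAx0); apply: kval_inj; rewrite -[RHS]hsubmxK rx0.
Qed.

Lemma fpres_extension m (A B C : lmodType R) (f : {linear A -> B}) (g : {linear B -> C}) :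
  short_exact f g -> fpres m A -> fpres m C -> fpres m B.
Proof.
elim: m A B C f g => [|m IH] A B C f g fg.
  move=> [a [eA eA_surj]] [c [eC eC_surj]].
  by have [eB [eB_surj _]] := horseshoe fg eA_surj eC_surj; exists (a + c)%N, eB.
move=> [a [eA [eA_surj KA]]] [c [eC [eC_surj KC]]].
have [eB [eB_surj [i [p ip]]]] := horseshoe fg eA_surj eC_surj.
by exists (a + c)%N, eB; split=> //; apply: IH ip KA KC.
Qed.

Lemma fpres_summand m (A M : lmodType R) : direct_summand A M -> fpres m M -> fpres m A.
Proof.
elim: m A M => [|m IH] A M [i [p pi]].
  case=> k [e e_surj]; exists k, (p \o e) => a.
  by have [x ex] := e_surj (i a); exists x; rewrite /= ex pi.
move=> FM; have [k [e [e_surj Ke]]] := FM.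
exists k, (p \o e); split.
  by move=> a; have [x ex] := e_surj (i a); exists x; rewrite /= ex pi.
have [j [q jq]] := short_exact_ker_comp p e_surj.
apply: fpres_extension jq Ke (IH _ M _ (fpresW FM)).
have pc0 x : p ((idfun \- (i \o p)) x) = 0 by rewrite /= linearB /= pi subrr.
exists (kernel_incl p), (ker_lift pc0) => y; apply: kval_inj.
by rewrite /= kval_ker linear0 subr0.
Qed.

Lemma direct_summand_pullback k (A B C : lmodType R) (f : {linear A -> B})
    (g : {linear B -> C}) (e : {linear F k -> C}) :
  short_exact f g -> direct_summand A (kernel (pullback_map g e)).
Proof.
move=> [f_inj [g_surj fg]].
have [h gh] := free_lift e g_surj.
have fa_ker a : pullback_map g e (linear_of (pair_linear f \0) a) = 0.
  by rewrite /= (exact_at_comp0 fg) raddf0 subr0.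
pose q := (fst \- (h \o snd)) \o kernel_incl (pullback_map g e).
have [r fr] : exists r : {linear kernel (pullback_map g e) -> A}, forall w, f (r w) = q w.
  apply: linear_factor_inj => // w; apply/fg.
  by rewrite /= linearB /= gh; apply: (kval_ker w).
exists (ker_lift fa_ker), r => a; apply: f_inj.
by rewrite fr /q /= raddf0 subr0.
Qed.

Lemma fpres_ker m (A B C : lmodType R) (f : {linear A -> B}) (g : {linear B -> C}) :
  short_exact f g -> fpres m B -> fpres m.+1 C -> fpres m A.
Proof.
move=> fg FB [k [e [e_surj Ke]]].
have [i [p ip]] := short_exact_pullback g e_surj.
exact: fpres_summand (direct_summand_pullback e fg) (fpres_extension ip Ke FB).
Qed.

Lemma fpres_coker m (A B C : lmodType R) (f : {linear A -> B}) (g : {linear B -> C}) :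
  short_exact f g -> fpres m A -> fpres m.+1 B -> fpres m.+1 C.
Proof.
move=> [f_inj [g_surj fg]] FA [k [e [e_surj Ke]]].
exists k, (g \o e); split.
  by move=> c; have [b <-] := g_surj c; have [x <-] := e_surj b; exists x.
have [i [p ip]] := short_exact_ker_comp g e_surj.
apply: fpres_extension ip Ke (fpres_iso (phi := ker_lift (exact_at_comp0 fg)) _ _ FA).
  by move=> x y /(congr1 kval) /f_inj.
move=> y; have [a fa] := (fg (kval y)).1 (kval_ker y).
by exists a; apply: kval_inj.
Qed.

Lemma fpres_of_complex m (M : lmodType R) k (d : forall i, {linear F (k i.+1) -> F (k i)})
    (eps : {linear F (k 0) -> M}) :
  free_complex_exact_upto m d eps -> fpres m M.
Proof.
elim: m M k d eps => [|m IH] M k d eps [eps_surj [exact0 exactS]]; exists (k 0), eps => //.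
split=> //.
have d0 x : eps (d 0 x) = 0 by apply/(exact0 erefl); exists x.
apply: (IH _ (fun i => k i.+1) (fun i => d i.+1) (ker_lift d0)); split; [|split].
- move=> y; have [x dx] := (exact0 erefl (kval y)).1 (kval_ker y).
  by exists x; apply: kval_inj.
- by move=> m_gt0 b; rewrite -(exactS 0 m_gt0 b) -kval_eq0.
- by move=> i; apply: (exactS i.+1).
Qed.

Lemma FPn_of_fpres m (M : lmodType R) : fpres m M -> FPn m M.
Proof.
elim: m M => [|m IH] M.
  by case=> k [e e_surj]; exists (fun _ => k), (fun _ => \0), e.
case=> k [e [e_surj Ke]]; have [k1 [d1 [eps1 [eps1_surj [exact0 exactS]]]]] := IH _ Ke.
pose k' i := if i is i'.+1 then k1 i' else k.
pose d' i : {linear F (k' i.+1) -> F (k' i)} :=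
  match i return {linear F (k' i.+1) -> F (k' i)} with
  | 0 => kernel_incl e \o eps1
  | i'.+1 => d1 i'
  end.
exists k', d', e; split; [|split] => // [_ b|[|i] m_gt0].
- split=> [eb0 | [a <-]]; last exact: kval_ker.
  by have [a ea] := eps1_surj (in_kernel eb0); exists a; rewrite /= ea.
- by move=> b; rewrite -(exact0 m_gt0 b) -kval_eq0.
- exact: exactS.
Qed.

Lemma FPnE m (M : lmodType R) : FPn m M <-> fpres m M.
Proof.
split; last exact: FPn_of_fpres.
by case=> k [d [eps complex]]; apply: fpres_of_complex complex.
Qed.

Lemma FPn_of_FPinf m (M : lmodType R) : FPinf M -> FPn m M.
Proof.
case=> k [d [eps [eps_surj [exact0 exactS]]]]; exists k, d, eps.
by split; [|split=> [_|i _]].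
Qed.

Lemma thick_fpres n : (forall M, fpres n M -> fpres n.+1 M) -> thick (fpres n).
Proof.
move=> coh; split=> [A M FM AM|A B C f g fg]; first exact: fpres_summand AM FM.
split; [|split].
- by move=> FA FB; apply/fpresW/(fpres_coker fg FA (coh _ FB)).
- by move=> FA FC; apply: fpres_extension fg FA FC.
- by move=> FB FC; apply: fpres_ker fg FB (coh _ FC).
Qed.

Lemma fpresS_of_thick n (M : lmodType R) : thick (fpres n) -> fpres n M -> fpres n.+1 M.
Proof.
move=> [_ thick_ses] FM; have [k [e e_surj]] := fpres_fg FM.
exists k, e; split=> //.
by apply: (thick_ses _ _ _ _ _ (short_exact_kernel e_surj)).2.2 => //; apply: fpres_free.
Qed.

Section CoherentResolution.
Variable n : nat.
Hypothesis coh : forall M : lmodType R, fpres n M -> fpres n.+1 M.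

Lemma free_syzygy (N : lmodType R) j (f : {linear F j -> N}) : fpres n (kernel f) ->
  exists j' (f' : {linear F j' -> F j}), fpres n (kernel f') /\ exact_at f' f.
Proof.
move=> /coh [k [e [e_surj Ke]]]; exists k, (kernel_incl f \o e); split.
  have [i [p ip]] := short_exact_ker_comp (kernel_incl f) e_surj.
  apply: fpres_extension ip Ke (fpres_trivial _ _) => y.
  by apply/kval_inj/kval_inj; apply: (kval_ker y).
move=> b; split=> [fb0 | [a <-]]; last exact: kval_ker.
by have [a ea] := e_surj (in_kernel fb0); exists a; rewrite /= ea.
Qed.

(* [next_fkm] keeps [cod_rank (next_fkm s)] definitionally equal to
   [dom_rank s], so iterating it yields a well-typed chain of maps. *)
Record fp_kernel_map := FPKernelMap {
  cod_rank : nat;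
  dom_rank : nat;
  fkm_map : {linear F dom_rank -> F cod_rank};
  fkm_ker : fpres n (kernel fkm_map) }.

Definition next_fkm (s : fp_kernel_map) : fp_kernel_map :=
  let j := constructive_indefinite_description _ (free_syzygy (fkm_ker s)) in
  let f := constructive_indefinite_description _ (svalP j) in
  FPKernelMap (proj1 (svalP f)).

Lemma next_fkm_exact s : exact_at (fkm_map (next_fkm s)) (fkm_map s).
Proof.
exact: proj2 (svalP (constructive_indefinite_description _
  (svalP (constructive_indefinite_description _ (free_syzygy (fkm_ker s)))))).
Qed.

Lemma FPinf_of_coherent (M : lmodType R) : fpres n M -> FPinf M.
Proof.
move=> /coh [k [e [e_surj Ke]]]; have [j [f [Kf fe]]] := free_syzygy Ke.
pose s i := iter i next_fkm (FPKernelMap Kf).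
exists (fun i => cod_rank (s i)), (fun i => fkm_map (s i)), e.
by split=> //; split=> // i; apply: next_fkm_exact.
Qed.

End CoherentResolution.

End FinitePresentation.

Theorem theorem2p3 (R : pzRingType) (n : nat) :
  [<-> n_coherent R n;
       thick (@FPn R n);
       forall M : lmodType R, FPn n M <-> FPinf M].
Proof.
have coherentE : n_coherent R n <-> forall M : lmodType R, fpres n M -> fpres n.+1 M.
  by split=> coh M /FPnE /coh /FPnE.
have thickE : thick (@FPn R n) <-> thick (@fpres R n).
  by split; apply: eq_thick => M; [|apply: iff_sym]; apply: FPnE.
tfae.
- by move=> /coherentE /thick_fpres /thickE.
- move=> /thickE /fpresS_of_thick coh M; split; last exact: FPn_of_FPinf.
  by move=> /FPnE; apply: FPinf_of_coherent.
- by move=> FP_inf M /FP_inf; apply: FPn_of_FPinf.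
Qed.
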